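(* Let $\mathcal{D}$ be a finite set of $N\ge 2$ distinct real numbers, all in $[a,b]$, and let $0<\delta<1$. Suppose $\mathrm{LB}$ and $\mathrm{RB}$ are range-based lower and upper confidence bounders with the following validity property: for every finite set $\mathcal{D}'$ of reals contained in an interval $[a',b']$, every $k\ge 1$ with $k\le|\mathcal{D}'|$, and every $\delta'\in(0,1)$, if $T$ is a uniform without-replacement sample of size $k$ from $\mathcal{D}'$, then $\Pr[\mathrm{LB}(T,a',b',\delta') > \mathrm{AVG}(\mathcal{D}')] < \delta'$ and $\Pr[\mathrm{RB}(T,a',b',\delta') < \mathrm{AVG}(\mathcal{D}')] < \delta'$. Let $2 \le m \le N$ and let $S$ be a uniform without-replacement sample of size $m$ from $\mathcal{D}$. Define $$g_\ell = \mathrm{LB}\big(S\setminus\{\max S\},\, a,\, \max S,\, \delta/2\big),\qquad g_r = \mathrm{RB}\big(S\setminus\{\min S\},\, \min S,\, b,\, \delta/2\big).$$ Then $\Pr\big[\mathrm{AVG}(\mathcal{D}) \notin [g_\ell, g_r]\big] < \delta$. In particular $g_\ell$ does not depend on $b$ and $g_r$ does not depend on $a$.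
   Context: $\mathrm{AVG}(\mathcal{D})$ is the arithmetic mean of the elements of $\mathcal{D}$. For $x\in\mathbb{R}$, write $\mathcal{D}_{<x}=\mathcal{D}\cap(-\infty,x)$ and $\mathcal{D}_{>x}=\mathcal{D}\cap(x,\infty)$. A uniform without-replacement sample of size $k$ from a finite set is a uniformly random $k$-element subset (equivalently the first $k$ entries of a uniformly random ordering). *)

From HB Require Import structures.
From mathcomp Require Import all_boot all_order all_algebra finmap.
From mathcomp Require Import reals.
Set Implicit Arguments. Unset Strict Implicit. Unset Printing Implicit Defensive.
Import Order.TTheory GRing.Theory Num.Theory.
Local Open Scope ring_scope.
Local Open Scope fset_scope.

Section Defs.
Variable R : realType.

Definition avg (A : {fset R}) : R := (\sum_(x <- A) x) / (#|` A|)%:R.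

Definition fmax (A : {fset R}) : R :=
  \big[Order.max/head 0 (A : seq R)]_(x <- A) x.
Definition fmin (A : {fset R}) : R :=
  \big[Order.min/head 0 (A : seq R)]_(x <- A) x.

Definition toR (D : {fset R}) (T : {set D}) : {fset R} :=
  [fset val x | x in enum T].

Definition Pr_sample (D : {fset R}) (k : nat) (P : pred {fset R}) : R :=
  (#|[set T : {set D} | (#|T| == k) && P (toR T)]|)%:R / ('C(#|` D|, k))%:R.

Definition in_range (D : {fset R}) (a b : R) : Prop :=
  forall x, x \in D -> a <= x <= b.

Definition valid_LB (LB : {fset R} -> R -> R -> R -> R) : Prop :=
  forall (D' : {fset R}) (a' b' : R) (k : nat) (d' : R),
    in_range D' a' b' -> (1 <= k <= #|` D'|)%N -> 0 < d' < 1 ->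
    Pr_sample D' k (fun T => avg D' < LB T a' b' d') < d'.

Definition valid_RB (RB : {fset R} -> R -> R -> R -> R) : Prop :=
  forall (D' : {fset R}) (a' b' : R) (k : nat) (d' : R),
    in_range D' a' b' -> (1 <= k <= #|` D'|)%N -> 0 < d' < 1 ->
    Pr_sample D' k (fun T => RB T a' b' d' < avg D') < d'.

End Defs.

From HB Require Import structures.
From mathcomp Require Import all_boot all_order all_algebra finmap.
From mathcomp Require Import reals.
From mathcomp Require Import lra.
Import Order.TTheory GRing.Theory Num.Theory.
Local Open Scope ring_scope.
Local Open Scope fset_scope.

(* By the union bound it suffices to show that each of the two
   events [AVG D < g_l] and [g_r < AVG D] has probability < delta/2.  Take
   the lower bound: condition the (k+1)-sample S on its maximum x.  Given
   max S = x, the rest S \ x is a uniform k-sample of the set D_{<x} of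
   elements of D below x, which lies in [a, x]; moreover AVG D_{<x} <= AVG D,
   so [AVG D < LB (S \ x) a x] implies [AVG D_{<x} < LB (S \ x) a x], an
   event of probability < delta/2 by validity of LB.  Summing over x gives the
   bound; the upper bound is the mirror image with the minimum. *)

(* Subsets T of D (as {set D}) correspond bijectively, via toR, to the
   sub-fsets of D, preserving size; this turns Pr_sample into counting. *)
Section Counting.
Variable R : realType.
Implicit Types (D S : {fset R}) (P Q : pred {fset R}).

Lemma toR_card D (T : {set D}) : #|` toR T| = #|T|.
Proof.
rewrite /toR card_imfset /=; last exact: val_inj.
rewrite cardE; apply: perm_size; apply: uniq_perm.
- exact: undup_uniq.
- exact: enum_uniq.
- by move=> x; rewrite mem_undup.
Qed.

Lemma mem_toR D (T : {set D}) x :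
  (x \in toR T) = [exists y : D, (y \in T) && (val y == x)].
Proof.
apply/imfsetP/existsP => /=.
- by move=> [y]; rewrite mem_enum => yT ->; exists y; rewrite yT eqxx.
- by move=> [y /andP[yT /eqP <-]]; exists y; rewrite ?mem_enum.
Qed.

Lemma toR_inj D : injective (@toR R D).
Proof.
have memT (T : {set D}) y :
    [exists z : D, (z \in T) && (val z == val y)] = (y \in T).
  apply/existsP/idP => [[z /andP[zT /eqP /val_inj <-]] //|yT].
  by exists y; rewrite yT eqxx.
move=> T1 T2 E; apply/setP => y.
by have := congr1 (fun S => val y \in S) E; rewrite /= !mem_toR !memT.
Qed.

Lemma toR_powerset D : fpowerset D =i [fset toR T | T in [set: {set D}]].
Proof.
move=> S; rewrite fpowersetE; apply/idP/imfsetP => [sub|[T _ ->]].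
- exists [set y : D | val y \in S]; first by rewrite /= inE.
  apply/fsetP => x; rewrite mem_toR; apply/idP/existsP => [xS|[y]].
  + by exists [` fsubsetP sub x xS]; rewrite inE xS eqxx.
  + by rewrite inE => /andP[yS /eqP <-].
- apply/fsubsetP => x; rewrite mem_toR => /existsP[y /andP[_ /eqP <-]].
  exact: fsvalP.
Qed.

Definition ksub_count D k P : nat :=
  \sum_(S <- fpowerset D) ((#|` S| == k) && P S).

Lemma ksub_countE D k P :
  #|[set T : {set D} | (#|T| == k) && P (toR T)]| = ksub_count D k P.
Proof.
rewrite /ksub_count (eq_fbigl _ _ (@toR_powerset D)).
rewrite big_imfset /=; last by move=> ? ? _ _; exact: toR_inj.
rewrite big_enum /= -sum1_card [RHS]big_mkcond /= big_mkcond /=.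
by apply: eq_bigr => T _; rewrite !inE toR_card; case: (_ && _).
Qed.

Lemma ksub_count_all D k : ksub_count D k xpredT = 'C(#|` D|, k).
Proof.
rewrite -ksub_countE cardfE -card_draws.
by apply: eq_card => T; rewrite !inE andbT.
Qed.

Lemma Pr_sample_lt D k P d : (k <= #|` D|)%N ->
  (Pr_sample D k P < d) =
  ((ksub_count D k P)%:R < d * (ksub_count D k xpredT)%:R).
Proof.
move=> kD; rewrite /Pr_sample ksub_countE ksub_count_all.
by rewrite ltr_pdivrMr // ltr0n bin_gt0.
Qed.

Lemma ksub_count_mono D k P Q :
  (forall S, S `<=` D -> #|` S| = k -> P S -> Q S) ->
  (ksub_count D k P <= ksub_count D k Q)%N.
Proof.
move=> PQ; rewrite /ksub_count big_seq [leqRHS]big_seq; apply: leq_sum => S.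
rewrite fpowersetE => SD; case: eqP => //= cS.
by case PS: (P S) => //; rewrite (PQ S).
Qed.

Lemma ksub_count_or D k P Q :
  (ksub_count D k (predU P Q) <= ksub_count D k P + ksub_count D k Q)%N.
Proof.
rewrite /ksub_count -big_split /=; apply: leq_sum => S _.
by case: (_ == _); case: (P S); case: (Q S).
Qed.

Lemma ksub_count_small D k P : (#|` D| < k)%N -> ksub_count D k P = 0%N.
Proof.
move=> Dk; apply/eqP; rewrite -leqn0 -(bin_small Dk) -ksub_count_all.
exact: ksub_count_mono.
Qed.

End Counting.
Arguments ksub_count {R}.

Lemma big_select_mem (T : eqType) (op : T -> T -> T) (s : seq T) x0 y :
  (forall u v, op u v = u \/ op u v = v) -> y \in s ->
  \big[op/head x0 s]_(x <- s) x \in s.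
Proof.
case: s => [//|h t] opsel _; rewrite big_seq.
elim/big_ind: _ => [|u v uin vin|x //]; first exact: mem_head.
by case: (opsel u v) => ->.
Qed.

Section Extremes.
Variable R : realType.
Implicit Types (S : {fset R}) (y : R).

Lemma fmax_in S y : y \in S -> fmax S \in S.
Proof.
by apply: big_select_mem => u v; rewrite /Order.max; case: ifP; [right|left].
Qed.

Lemma fmin_in S y : y \in S -> fmin S \in S.
Proof.
by apply: big_select_mem => u v; rewrite /Order.min; case: ifP; [left|right].
Qed.

Lemma fmax_lt S y : y \in S -> y != fmax S -> y < fmax S.
Proof. by move=> yS ne; rewrite lt_neqAle ne le_bigmax_seq. Qed.

Lemma fmin_gt S y : y \in S -> y != fmin S -> fmin S < y.
Proof. by move=> yS ne; rewrite lt_neqAle eq_sym ne ge_bigmin_seq. Qed.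

End Extremes.

(* Peeling off the extreme element.  ext S is an element of S that is
   lt-above all other elements of S (ext = fmax with lt = <, or ext = fmin
   with lt = >); below D x is the part of D lt-below x. *)
Section Peeling.
Variable R : realType.
Variables (lt : rel R) (ext : {fset R} -> R).
Hypothesis ext_in : forall (S : {fset R}) y, y \in S -> ext S \in S.
Hypothesis ext_lt : forall (S : {fset R}) y, y \in S -> y != ext S -> lt y (ext S).
Hypothesis lt_asym : forall x y, lt x y -> ~~ lt y x.
Arguments ext_in {S y}. Arguments ext_lt {S y}. Arguments lt_asym {x y}.
Implicit Types (D S : {fset R}) (P : pred {fset R}).

Definition below D x := [fset y in D | lt y x].

Lemma lt_irr x : ~~ lt x x.
Proof. by apply/negP => xx; have := lt_asym xx; rewrite xx. Qed.

Lemma peel_ext {D x S} : S `<=` below D x -> ext (x |` S) = x /\ (x |` S) `\ x = S.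
Proof.
move=> /fsubsetP Sx.
have ltSx y : y \in S -> lt y x by move/Sx; rewrite !inE => /andP[].
have xS : x \notin S by apply/negP => /ltSx; rewrite (negbTE (lt_irr x)).
split; last exact: fsetU1K.
have xin : x \in x |` S := fset1U1 x S.
apply/eqP; apply/negPn/negP => ne.
have := ext_in xin; rewrite in_fset1U (negbTE ne) /= => /ltSx ltex.
by have := lt_asym ltex; rewrite ext_lt // eq_sym.
Qed.

Lemma ext_below {D S} : S `<=` D -> S `\ ext S `<=` below D (ext S).
Proof.
move=> /fsubsetP SD; apply/fsubsetP => y; rewrite in_fsetD1 => /andP[ne yS].
by rewrite !inE SD //= ext_lt.
Qed.

(* Every nonempty subset has exactly one extreme element, so counting
   (k+1)-subsets is the same as counting them according to their extreme. *)
Lemma ksub_count_by_ext D k P :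
  ksub_count D k.+1 P = (\sum_(x <- D) \sum_(S <- fpowerset D)
    ((ext S == x) && ((#|` S| == k.+1) && P S)))%N.
Proof.
rewrite exchange_big /ksub_count big_seq [RHS]big_seq; apply: eq_bigr => S.
rewrite fpowersetE => SD.
case F: ((#|` S| == k.+1) && P S); last by rewrite big1 // => x _; rewrite andbF.
case/andP: F => /eqP cS _.
have [y yS] : exists y, y \in S.
  by apply/fset0Pn; apply: contra_eq_neq cS => ->; rewrite cardfs0.
rewrite (bigD1_seq (ext S)) ?fset_uniq ?(fsubsetP SD _ (ext_in yS)) //= eqxx.
by rewrite big1 // => x; rewrite eq_sym => /negbTE ->.
Qed.

Lemma ksub_count_with_ext D k P x : x \in D ->
  (\sum_(S <- fpowerset D) ((ext S == x) && ((#|` S| == k.+1) && P S)))%N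
  = ksub_count (below D x) k (fun S => P (x |` S)).
Proof.
move=> xD; set G := fun S => ((ext S == x) && ((#|` S| == k.+1) && P S) : nat).
have belowD S : S \in fpowerset (below D x) -> S `<=` below D x.
  by rewrite fpowersetE.
transitivity (\sum_(S <- [fset x |` S | S in fpowerset (below D x)]) G S)%N.
  symmetry; apply: big_fset_incl => [|S].
    apply/fsubsetP => _ /imfsetP [S /= /belowD /fsubsetP Sx ->].
    rewrite fpowersetE; apply/fsubsetP => y; rewrite in_fset1U.
    by case/orP=> [/eqP -> //|/Sx]; rewrite !inE => /andP[].
  rewrite fpowersetE => SD SnI; rewrite /G.
  have := ext_below SD.
  case: eqP => //= eS; case: eqP => //= cS; rewrite eS => Sbelow.
  exfalso; move/negP: SnI; apply.
  have [y yS] : exists y, y \in S.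
    by apply/fset0Pn; apply: contra_eq_neq cS => ->; rewrite cardfs0.
  apply/imfsetP; exists (S `\ x); last by rewrite fsetD1K // -eS (ext_in yS).
  by rewrite /= fpowersetE.
rewrite big_imfset /=; last first.
  move=> S1 S2 /belowD /peel_ext [_ S1K] /belowD /peel_ext [_ S2K] eS.
  by rewrite -S1K -S2K eS.
rewrite /ksub_count big_seq [RHS]big_seq; apply: eq_bigr => S /belowD Sx.
rewrite /G; have [-> _] := peel_ext Sx; rewrite eqxx cardfsU1.
suff -> : x \notin S by [].
by apply/negP => /(fsubsetP Sx); rewrite !inE (negbTE (lt_irr x)) andbF.
Qed.

Lemma ksub_count_peel D k P :
  ksub_count D k.+1 P =
  (\sum_(x <- D) ksub_count (below D x) k (fun S => P (x |` S)))%N.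
Proof.
rewrite ksub_count_by_ext big_seq [RHS]big_seq.
by apply: eq_bigr => x xD; rewrite ksub_count_with_ext.
Qed.

Lemma ext_tail_bound D k P (d : R) : (k < #|` D|)%N ->
  (forall x, (k <= #|` below D x|)%N ->
    (ksub_count (below D x) k (fun S => P (x |` S)))%:R
      < d * (ksub_count (below D x) k xpredT)%:R) ->
  (ksub_count D k.+1 P)%:R < d * (ksub_count D k.+1 xpredT)%:R.
Proof.
move=> kD tail; have [y yD] : exists y, y \in D.
  by apply/fset0Pn; rewrite -cardfs_gt0; apply: leq_ltn_trans kD.
have eD := ext_in yD.
have below_ext : below D (ext D) = D `\ ext D.
  apply/fsetP => z; rewrite in_fsetD1 !inE.
  case: (eqVneq z (ext D)) => [->|ne]; first by rewrite (negbTE (lt_irr _)) andbF.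
  by case zD: (z \in D) => //=; rewrite ext_lt.
rewrite !ksub_count_peel !natr_sum mulr_sumr.
rewrite (bigD1_seq (ext D)) ?fset_uniq //.
rewrite [ltRHS](bigD1_seq (ext D)) ?fset_uniq //=.
apply: ltr_leD.
  apply: tail; rewrite below_ext.
  by move: kD; rewrite (cardfsD1 (ext D)) eD.
apply: ler_sum => x _; case: (leqP k #|` below D x|) => kx.
  by apply/ltW/tail.
by rewrite !ksub_count_small // mulr0.
Qed.

End Peeling.
Arguments below {R}.
Arguments peel_ext {R lt ext} ext_in ext_lt lt_asym {D x S}.
Arguments ext_tail_bound {R lt ext} ext_in ext_lt lt_asym {D k P d}.

Lemma mediant_le (F : realFieldType) (sA sB nA nB c : F) :
  0 < nA -> 0 <= nB -> sA <= nA * c -> nB * c <= sB ->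
  sA / nA <= (sA + sB) / (nA + nB).
Proof.
move=> nA0 nB0 sAc sBc; rewrite ler_pdivrMr // mulrAC ler_pdivlMr; last by lra.
have h1 : 0 <= (nA * c - sA) * nB by apply: mulr_ge0; rewrite ?subr_ge0.
have h2 : 0 <= (sB - nB * c) * nA by apply: mulr_ge0; [rewrite subr_ge0 | exact: ltW].
nra.
Qed.

Section Averages.
Variable R : realType.
Implicit Types (D A : {fset R}) (p : pred R).

Lemma fsum_const A (c : R) : \sum_(y <- A) c = (#|` A|)%:R * c.
Proof.
by rewrite card_fset_sum1 natr_sum mulr_suml; apply: eq_bigr => _ _; rewrite mulr1n mul1r.
Qed.

Lemma avg_split D p :
  avg D = (\sum_(y <- [fset y in D | p y]) y + \sum_(y <- [fset y in D | ~~ p y]) y)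
          / ((#|` [fset y in D | p y]|)%:R + (#|` [fset y in D | ~~ p y]|)%:R).
Proof. by rewrite /avg -natrD !card_fset_sum1 -!big_fsetID. Qed.

Lemma avg_lower_part D p (c : R) : [fset y in D | p y] != fset0 ->
  (forall y, y \in D -> p y -> y <= c) -> (forall y, y \in D -> ~~ p y -> c <= y) ->
  avg [fset y in D | p y] <= avg D.
Proof.
move=> ne lo hi; rewrite (avg_split D p) {1}/avg.
apply: mediant_le; first by rewrite ltr0n cardfs_gt0.
- by rewrite ler0n.
- rewrite -fsum_const big_seq [leRHS]big_seq; apply: ler_sum => y.
  by rewrite !inE => /andP[]; apply: lo.
- rewrite -fsum_const big_seq [leRHS]big_seq; apply: ler_sum => y.
  by rewrite !inE => /andP[]; apply: hi.
Qed.

Lemma avg_upper_part D p (c : R) : [fset y in D | p y] != fset0 ->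
  (forall y, y \in D -> p y -> c <= y) -> (forall y, y \in D -> ~~ p y -> y <= c) ->
  avg D <= avg [fset y in D | p y].
Proof.
move=> ne hi lo; rewrite (avg_split D p) [in leRHS]/avg.
set sA := \sum_(y <- _ | _) _; set sB := \sum_(y <- _ | _) _.
have sAc : (#|` [fset y in D | p y]|)%:R * c <= sA.
  rewrite /sA -fsum_const [leLHS]big_seq [leRHS]big_seq; apply: ler_sum => y.
  by rewrite !inE => /andP[]; apply: hi.
have sBc : sB <= (#|` [fset y in D | ~~ p y]|)%:R * c.
  rewrite /sB -fsum_const [leLHS]big_seq [leRHS]big_seq; apply: ler_sum => y.
  by rewrite !inE => /andP[]; apply: lo.
have := @mediant_le R (- sA) (- sB) (#|` [fset y in D | p y]|)%:R
  (#|` [fset y in D | ~~ p y]|)%:R (- c).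
rewrite -opprD !mulNr lerN2 !mulrN !lerN2; apply => //.
by rewrite ltr0n cardfs_gt0.
Qed.

End Averages.

Section Tails.
Variable R : realType.
Implicit Types (D : {fset R}) (a b d : R).

Lemma ltr_asym (x y : R) : x < y -> ~~ (y < x).
Proof. by move/lt_gtF ->. Qed.

(* Lower tail: condition on x = max S; since AVG D_{<x} <= AVG D, the failure
   event implies the failure of LB on the k-sample S \ x of D_{<x}, which lies
   in [a, x], an event of probability < d by validity of LB. *)
Lemma lower_tail_bound D a b d k (LB : {fset R} -> R -> R -> R -> R) :
  in_range D a b -> 0 < d < 1 -> valid_LB LB -> (1 <= k < #|` D|)%N ->
  (ksub_count D k.+1 (fun S => avg D < LB (S `\ fmax S) a (fmax S) d))%:R
    < d * (ksub_count D k.+1 xpredT)%:R.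
Proof.
move=> Dab d01 validLB /andP[k1 kD].
apply: (ext_tail_bound (@fmax_in R) (@fmax_lt R) ltr_asym kD).
move=> x kx; set B := below <%R D x.
have avgB : avg B <= avg D.
  apply: (@avg_lower_part _ D _ x) => [|y _ /ltW //|y _]; last by rewrite leNgt.
  by rewrite -cardfs_gt0 (leq_trans k1 kx).
apply: (@le_lt_trans _ _ (ksub_count B k (fun T => avg B < LB T a x d))%:R).
  rewrite ler_nat; apply: ksub_count_mono => S SB _.
  have [-> ->] := peel_ext (@fmax_in R) (@fmax_lt R) ltr_asym SB.
  exact: le_lt_trans.
rewrite -Pr_sample_lt //; apply: validLB => //; last by rewrite k1.
move=> y; rewrite !inE => /andP[yD yx]; have /andP[ay _] := Dab y yD.
by rewrite ay ltW.
Qed.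

Lemma upper_tail_bound D a b d k (RB : {fset R} -> R -> R -> R -> R) :
  in_range D a b -> 0 < d < 1 -> valid_RB RB -> (1 <= k < #|` D|)%N ->
  (ksub_count D k.+1 (fun S => RB (S `\ fmin S) (fmin S) b d < avg D))%:R
    < d * (ksub_count D k.+1 xpredT)%:R.
Proof.
move=> Dab d01 validRB /andP[k1 kD].
have gt_asym (x y : R) : y < x -> ~~ (x < y) by exact: ltr_asym.
apply: (ext_tail_bound (lt := fun y x => x < y) (@fmin_in R) (@fmin_gt R) gt_asym kD).
move=> x kx; set B := below (fun y x => x < y) D x.
have avgB : avg D <= avg B.
  apply: (@avg_upper_part _ D _ x) => [|y _ /ltW //|y _]; last by rewrite leNgt.
  by rewrite -cardfs_gt0 (leq_trans k1 kx).
apply: (@le_lt_trans _ _ (ksub_count B k (fun T => RB T x b d < avg B))%:R).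
  rewrite ler_nat; apply: ksub_count_mono => S SB _.
  have [-> ->] := peel_ext (lt := fun y x => x < y) (@fmin_in R) (@fmin_gt R) gt_asym SB.
  by move=> /lt_le_trans; apply.
rewrite -Pr_sample_lt //; apply: validRB => //; last by rewrite k1.
move=> y; rewrite !inE => /andP[yD xy]; have /andP[_ yb] := Dab y yD.
by rewrite yb ltW.
Qed.

End Tails.
Arguments lower_tail_bound {R D a b d k LB}.
Arguments upper_tail_bound {R D a b d k RB}.

Theorem mainTheorem3 (R : realType) (D : {fset R}) (a b delta : R) (m : nat)
    (LB RB : {fset R} -> R -> R -> R -> R) :
  (2 <= #|` D|)%N -> in_range D a b -> 0 < delta < 1 ->
  valid_LB LB -> valid_RB RB ->
  (2 <= m <= #|` D|)%N ->
  Pr_sample D m (fun S =>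
    ~~ (LB (S `\ fmax S) a (fmax S) (delta / 2) <= avg D <=
        RB (S `\ fmin S) (fmin S) b (delta / 2))) < delta.
Proof.
move=> _ Dab delta01 validLB validRB /andP[m2 mD].
have half01 : 0 < delta / 2 < 1 by lra.
case: m m2 mD => [//|k] k1 kD; rewrite Pr_sample_lt //.
have kD' : (1 <= k < #|` D|)%N by apply/andP.
have lower := lower_tail_bound Dab half01 validLB kD'.
have upper := upper_tail_bound Dab half01 validRB kD'.
rewrite [delta in _ < delta * _]splitr mulrDl.
apply: le_lt_trans (ltrD lower upper).
rewrite -natrD ler_nat; apply: leq_trans (ksub_count_or _ D k.+1 _ _).
by apply: ksub_count_mono => S _ _ /=; rewrite negb_and -!ltNge.
Qed.
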